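(* For every first-order formula $\phi$ of BID-logic there is a formula $\psi$ of $\mathbf{ID}$ such that $\phi\equiv\psi$, i.e. for every suitable structure $M$ and every team $X$ of $M$ with $dom(X)\supseteq Fv(\phi)\cup Fv(\psi)$, $M\models_X\phi$ if and only if $M\models_X\psi$.
   Context: Fix a first-order signature; structures have non-empty domains. An assignment on $M$ is a function from a finite set of variables into the domain of $M$; $s(a/x)$ agrees with $s$ except that it sends $x$ to $a$. A team $X$ of $M$ is a set of assignments all with the same domain $dom(X)$. For $F:X\to M$, $X(F/x)=\{s(F(s)/x):s\in X\}$; $X(M/x)=\{s(a/x):a\in M,s\in X\}$. Formulas of BID-logic: $\phi::=\alpha\mid=\!\!(t_1,\dots,t_n)\mid\neg=\!\!(t_1,\dots,t_n)\mid\bot\mid\phi\wedge\phi\mid\phi\otimes\phi\mid\phi\veebar\phi\mid\phi\to\phi\mid\phi\multimap\phi\mid\forall x\phi\mid\exists x\phi$, with $\alpha$ a first-order literal (atomic or negated atomic formula) and $t_i$ terms; $Fv(=\!\!(t_1,\dots,t_n))$ is the set of variables in the $t_i$, otherwise free variables as usual. Semantics for teams $X$ with $dom(X)\supseteq$ free variables: $M\models_X\alpha$ iff $M\models_s\alpha$ for all $s\in X$; $M\models_X=\!\!(t_1,\dots,t_n)$ iff for all $s,s'\in X$ with $s(t_i)=s'(t_i)$ for all $i<n$, $s(t_n)=s'(t_n)$; $M\models_X\neg=\!\!(\dots)$ iff $X=\emptyset$; $M\models_X\bot$ iff $X=\emptyset$; $\wedge$ as usual; $M\models_X\phi\otimes\psi$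 iff $X=Y\cup Z$ for some $Y,Z\subseteq X$ with $M\models_Y\phi$, $M\models_Z\psi$; $M\models_X\phi\veebar\psi$ iff $M\models_X\phi$ or $M\models_X\psi$; $M\models_X\phi\to\psi$ iff for all $Y\subseteq X$, $M\models_Y\phi$ implies $M\models_Y\psi$; $M\models_X\phi\multimap\psi$ iff for all teams $Y$ with $dom(Y)=dom(X)$, $M\models_Y\phi$ implies $M\models_{X\cup Y}\psi$; $M\models_X\exists x\phi$ iff $M\models_{X(F/x)}\phi$ for some $F:X\to M$; $M\models_X\forall x\phi$ iff $M\models_{X(M/x)}\phi$. A first-order formula of BID-logic is one built from first-order literals using only $\wedge,\otimes,\forall x,\exists x$. $\mathbf{ID}$ formulas are those generated by $\phi::=\alpha\mid=\!\!(t)\mid\bot\mid\phi\wedge\phi\mid\phi\veebar\phi\mid\phi\to\phi\mid\forall x\phi\mid\exists x\phi$ with $\alpha$ a first-order atomic formula and $t$ a term. *)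

From Stdlib Require Import List Arith Bool Vectors.Fin.
Import ListNotations.

Set Implicit Arguments.

Record signature : Type := Signature {
  fsym : Type; farity : fsym -> nat;
  rsym : Type; rarity : rsym -> nat }.

Inductive term (S : signature) : Type :=
| Var (x : nat)
| App (f : fsym S) (args : Fin.t (farity S f) -> term S).
Arguments Var {S} x.

Inductive atom (S : signature) : Type :=
| ARel (r : rsym S) (args : Fin.t (rarity S r) -> term S)
| AEq (t1 t2 : term S).

(* BID-logic formulas.  [Dep ts t] is  =(ts, t), i.e. =(t_1,...,t_{n-1},t_n)
   with ts = [t_1; ...; t_{n-1}] and t = t_n (so n >= 1). *)
Inductive formula (S : signature) : Type :=
| Pos (a : atom S)
| Neg (a : atom S)
| Dep (ts : list (term S)) (t : term S)
| NDep (ts : list (term S)) (t : term S)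
| Bot
| And (p q : formula S)
| Tensor (p q : formula S)
| Vee (p q : formula S)
| Imp (p q : formula S)
| Lolli (p q : formula S)
| All (x : nat) (p : formula S)
| Ex (x : nat) (p : formula S).
Arguments Bot {S}.

Record structure (S : signature) : Type := Structure {
  carrier : Type;
  elt0 : carrier;
  fint : forall f : fsym S, (Fin.t (farity S f) -> carrier) -> carrier;
  rint : forall r : rsym S, (Fin.t (rarity S r) -> carrier) -> Prop }.

Definition assignment S (M : structure S) := nat -> option (carrier M).

Definition has_dom S (M : structure S) (V : list nat) (s : assignment M) : Prop :=
  forall x, s x <> None <-> In x V.

Definition is_team S (M : structure S) (V : list nat) (X : assignment M -> Prop) : Prop :=
  forall s, X s -> has_dom V s.

Definition upd S (M : structure S) (s : assignment M) (x : nat) (a : carrier M)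
  : assignment M := fun y => if Nat.eqb y x then Some a else s y.

(* Value of a term (the default [elt0] is never used when dom(s) ⊇ vars). *)
Fixpoint eval S (M : structure S) (s : assignment M) (t : term S) : carrier M :=
  match t with
  | Var x => match s x with Some a => a | None => elt0 M end
  | App f args => fint M f (fun i => eval s (args i))
  end.

Definition holds_atom S (M : structure S) (s : assignment M) (a : atom S) : Prop :=
  match a with
  | ARel r args => rint M r (fun i => eval s (args i))
  | AEq t1 t2 => eval s t1 = eval s t2
  end.

Fixpoint occurs S (x : nat) (t : term S) : Prop :=
  match t with
  | Var y => x = y
  | App f args => exists i, occurs x (args i)
  end.

Definition occurs_atom S (x : nat) (a : atom S) : Prop :=
  match a with
  | ARel r args => exists i, occurs x (args i)
  | AEq t1 t2 => occurs x t1 \/ occurs x t2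
  end.

Fixpoint free S (x : nat) (p : formula S) : Prop :=
  match p with
  | Pos a | Neg a => occurs_atom x a
  | Dep ts t | NDep ts t => Exists (occurs x) ts \/ occurs x t
  | Bot => False
  | And p q | Tensor p q | Vee p q | Imp p q | Lolli p q => free x p \/ free x q
  | All y p | Ex y p => x <> y /\ free x p
  end.

Fixpoint sat S (M : structure S) (V : list nat) (X : assignment M -> Prop)
  (p : formula S) {struct p} : Prop :=
  match p with
  | Pos a => forall s, X s -> holds_atom s a
  | Neg a => forall s, X s -> ~ holds_atom s a
  | Dep ts t => forall s s', X s -> X s' ->
      Forall (fun u => eval s u = eval s' u) ts -> eval s t = eval s' t
  | NDep ts t => forall s, ~ X s
  | Bot => forall s, ~ X s
  | And p q => sat V X p /\ sat V X q
  | Tensor p q => exists Y Z : assignment M -> Prop,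
      (forall s, Y s -> X s) /\ (forall s, Z s -> X s) /\
      (forall s, X s -> Y s \/ Z s) /\ sat V Y p /\ sat V Z q
  | Vee p q => sat V X p \/ sat V X q
  | Imp p q => forall Y : assignment M -> Prop,
      (forall s, Y s -> X s) -> sat V Y p -> sat V Y q
  | Lolli p q => forall Y : assignment M -> Prop,
      is_team V Y -> sat V Y p -> sat V (fun s => X s \/ Y s) q
  | All x p => sat (x :: V) (fun t => exists s a, X s /\ t = upd s x a) p
  | Ex x p => exists F : assignment M -> carrier M,
      sat (x :: V) (fun t => exists s, X s /\ t = upd s x (F s)) p
  end.

Fixpoint is_FO S (p : formula S) : Prop :=
  match p with
  | Pos _ | Neg _ => True
  | And p q | Tensor p q => is_FO p /\ is_FO q
  | All _ p | Ex _ p => is_FO p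
  | _ => False
  end.

Fixpoint is_ID S (p : formula S) : Prop :=
  match p with
  | Pos _ => True
  | Dep ts _ => ts = nil
  | Bot => True
  | And p q | Vee p q | Imp p q => is_ID p /\ is_ID q
  | All _ p | Ex _ p => is_ID p
  | _ => False
  end.

From Stdlib Require Import List Classical ClassicalEpsilon.

(* Every first-order BID formula is flat: a team satisfies it iff each of its
   assignments satisfies it in the Tarskian sense.  Flat formulas are closed
   under [p -> q] with the flat condition "P implies Q" (test on singleton
   subteams), and [Bot] is flat with condition False.  So the only
   connectives outside ID, a negated atom and the tensor, can be replaced by
   [a -> Bot] and [(p -> Bot) -> q]: classically, "not P implies Q" is "P or Q",
   the flat condition of the tensor. *)

Set Implicit Arguments.

Fixpoint fo_holds S (M : structure S) (p : formula S) (s : assignment M) : Prop :=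
  match p with
  | Pos a => holds_atom s a
  | Neg a => ~ holds_atom s a
  | And p q => fo_holds p s /\ fo_holds q s
  | Tensor p q => fo_holds p s \/ fo_holds q s
  | All x p => forall a, fo_holds p (upd s x a)
  | Ex x p => exists a, fo_holds p (upd s x a)
  | _ => True
  end.

Fixpoint id_translation S (p : formula S) : formula S :=
  match p with
  | Neg a => Imp (Pos a) Bot
  | And p q => And (id_translation p) (id_translation q)
  | Tensor p q => Imp (Imp (id_translation p) Bot) (id_translation q)
  | All x p => All x (id_translation p)
  | Ex x p => Ex x (id_translation p)
  | p => p
  end.

Lemma is_ID_id_translation S (p : formula S) : is_FO p -> is_ID (id_translation p).
Proof. induction p; simpl; tauto. Qed.

Section Flatness.

Variable S : signature.
Variable M : structure S.

Definition flat (p : formula S) (P : assignment M -> Prop) : Prop :=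
  forall V X, sat V X p <-> forall s, X s -> P s.

Lemma flat_ext p (P Q : assignment M -> Prop) :
  (forall s, P s <-> Q s) -> flat p P -> flat p Q.
Proof. intros PQ Hp V X; rewrite (Hp V X); firstorder. Qed.

Lemma flat_Pos a : flat (Pos a) (fun s => holds_atom s a).
Proof. intros V X; reflexivity. Qed.

Lemma flat_Neg a : flat (Neg a) (fun s => ~ holds_atom s a).
Proof. intros V X; reflexivity. Qed.

Lemma flat_Bot : flat Bot (fun _ => False).
Proof. intros V X; simpl; firstorder. Qed.

Lemma flat_And p q P Q :
  flat p P -> flat q Q -> flat (And p q) (fun s => P s /\ Q s).
Proof. intros Hp Hq V X; simpl; rewrite (Hp V X), (Hq V X); firstorder. Qed.

Lemma flat_Imp p q P Q :
  flat p P -> flat q Q -> flat (Imp p q) (fun s => P s -> Q s).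
Proof.
  intros Hp Hq V X; simpl; split.
  - intros H s Xs Ps.
    assert (Hs : sat V (fun t => t = s) q).
    { apply H; [now intros t ->|]. apply Hp; now intros t ->. }
    now apply (proj1 (Hq V _) Hs).
  - intros H Y YX HY; apply Hq; intros s Ys.
    apply H; [now apply YX|]. now apply (Hp V Y).
Qed.

Lemma flat_Tensor p q P Q :
  flat p P -> flat q Q -> flat (Tensor p q) (fun s => P s \/ Q s).
Proof.
  intros Hp Hq V X; simpl; split.
  - intros (Y & Z & _ & _ & XYZ & HY & HZ) s Xs.
    rewrite (Hp V Y) in HY; rewrite (Hq V Z) in HZ.
    destruct (XYZ s Xs); auto.
  - intros H.
    exists (fun s => X s /\ P s), (fun s => X s /\ Q s).
    repeat split; try (intros s []; assumption).
    + intros s Xs; destruct (H s Xs); auto.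
    + apply Hp; tauto.
    + apply Hq; tauto.
Qed.

Lemma flat_All x p P :
  flat p P -> flat (All x p) (fun s => forall a, P (upd s x a)).
Proof.
  intros Hp V X; simpl; rewrite (Hp (x :: V)); split.
  - intros H s Xs a; apply H; eauto.
  - intros H t (s & a & Xs & ->); auto.
Qed.

Lemma flat_Ex x p P :
  flat p P -> flat (Ex x p) (fun s => exists a, P (upd s x a)).
Proof.
  intros Hp V X; simpl; split.
  - intros [F HF] s Xs; rewrite (Hp (x :: V)) in HF; exists (F s); apply HF; eauto.
  - intros H.
    exists (fun s => epsilon (inhabits (elt0 M)) (fun a => P (upd s x a))).
    apply Hp; intros t (s & Xs & ->).
    now apply (epsilon_spec (inhabits (elt0 M)) (fun a => P (upd s x a))), H.
Qed.

Lemma flat_neg p P : flat p P -> flat (Imp p Bot) (fun s => ~ P s).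
Proof. intros Hp; apply flat_Imp; [exact Hp | apply flat_Bot]. Qed.

Lemma flat_neg_Imp p q P Q :
  flat p P -> flat q Q -> flat (Imp (Imp p Bot) q) (fun s => P s \/ Q s).
Proof.
  intros Hp Hq; eapply flat_ext; [| exact (flat_Imp (flat_neg Hp) Hq)].
  intros s; pose proof (classic (P s)); tauto.
Qed.

Lemma flat_fo_holds p : is_FO p -> flat p (fo_holds p).
Proof.
  induction p; simpl; try tauto; intros Hfo.
  - apply flat_Pos.
  - apply flat_Neg.
  - apply flat_And; tauto.
  - apply flat_Tensor; tauto.
  - now apply flat_All, IHp.
  - now apply flat_Ex, IHp.
Qed.

Lemma flat_id_translation p : is_FO p -> flat (id_translation p) (fo_holds p).
Proof.
  induction p; simpl; try tauto; intros Hfo.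
  - apply flat_Pos.
  - apply flat_neg, flat_Pos.
  - apply flat_And; tauto.
  - apply flat_neg_Imp; tauto.
  - now apply flat_All, IHp.
  - now apply flat_Ex, IHp.
Qed.

End Flatness.

Theorem theorem3p4 :
  forall (S : signature) (phi : formula S), is_FO phi ->
  exists psi : formula S, is_ID psi /\
    forall (M : structure S) (V : list nat) (X : assignment M -> Prop),
      is_team V X ->
      (forall x, free x phi \/ free x psi -> In x V) ->
      (sat V X phi <-> sat V X psi).
Proof.
  intros S phi Hfo.
  exists (id_translation phi); split; [now apply is_ID_id_translation|].
  intros M V X _ _.
  rewrite (@flat_fo_holds S M phi Hfo V X), (@flat_id_translation S M phi Hfo V X).
  reflexivity.
Qed.
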